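(* Let $k$ be a field, $(X,\leq)$ a locally finite preordered set and $C=IC(X)$ its incidence coalgebra. Let $(\mathcal C_i)_{i\in I}$ be the equivalence classes of $\sim$ and $D_i=\sum_{x,y\in\mathcal C_i}k e_{x,y}$. Then: (i) the coradical $C_0$ of $C$ equals $\sum_{i\in I}D_i$; (ii) for every $n\geq 0$, the $(n+1)$-th term $C_n$ of the coradical filtration of $C$ is the subspace spanned by all $e_{x,y}$ such that the interval $[x,y]$ has length at most $n$.
   Context: A preorder is reflexive and transitive; $(X,\leq)$ is locally finite if each $[x,y]=\{z\mid x\leq z\leq y\}$ is finite. $IC(X)$ has $k$-basis $\{e_{x,y}\mid x\leq y\}$, comultiplication $\Delta(e_{x,y})=\sum_{x\leq z\leq y}e_{x,z}\otimes e_{z,y}$ and counit $\varepsilon(e_{x,y})=\delta_{x,y}$. $x\sim y$ means $x\leq y$ and $y\leq x$. The coradical $C_0$ is the sum of all simple subcoalgebras; for subspaces $U,V$, $U\wedge V=\Delta^{-1}(U\otimes C+C\otimes V)$, and $C_n=C_0\wedge C_{n-1}$ for $n\ge1$. For $x\leq y$, the length of $[x,y]$ is $0$ if $x\sim y$, and otherwise is the greatest $n>0$ such that there is a chain $x=x_0<x_1<\cdots<x_n=y$ in $X$ (where $a<b$ means $a\leq b$ and not $b\leq a$). *)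

From mathcomp Require Import all_boot all_algebra.
From Stdlib Require Lists.List.
From mathcomp Require Import boolp.
Set Implicit Arguments. Unset Strict Implicit. Unset Printing Implicit Defensive.
Import GRing.Theory.
Local Open Scope ring_scope.

Section IncidenceCoalgebra.
Variables (k : fieldType) (X : Type) (le : X -> X -> Prop).

Definition preorder_rel : Prop :=
  (forall x, le x x) /\ (forall x y z, le x y -> le y z -> le x z).
Definition locally_finite : Prop :=
  forall x y, exists s : list X, forall z, le x z -> le z y -> Stdlib.Lists.List.In z s.

Definition sim x y := le x y /\ le y x.
Definition lt x y := le x y /\ ~ le y x.

(* Ambient spaces: k-valued functions on X*X (for C) and on (X*X)*(X*X)
   (for C (x) C, identified with the lspan of e_{a,b} (x) e_{c,d}). *)
Definition vec := (X * X)%type -> k.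
Definition tvec := ((X * X) * (X * X))%type -> k.

Inductive lspan (I : Type) (S : (I -> k) -> Prop) : (I -> k) -> Prop :=
| span0 : lspan S (fun _ => 0)
| span_in v : S v -> lspan S v
| span_comb (a : k) v w : lspan S v -> lspan S w -> lspan S (fun i => a * v i + w i).

Definition e (x y : X) : vec := fun p => if `[< p = (x, y) >] then 1 else 0.

Definition inC (v : vec) : Prop := lspan (fun w => exists x y, le x y /\ w = e x y) v.

Definition tens (u w : vec) : tvec := fun pq => u pq.1 * w pq.2.

(* comultiplication: Delta(e_{x,y}) = sum_{x<=z<=y} e_{x,z} (x) e_{z,y},
   written coefficientwise (linear extension). *)
Definition Delta (v : vec) : tvec := fun pq =>
  let: ((a, b), (c, d)) := pq in
  if `[< b = c /\ le a b /\ le b d >] then v (a, d) else 0.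


Definition subspace (U : vec -> Prop) : Prop :=
  (forall v, U v -> inC v) /\ U (fun _ => 0) /\
  (forall a v w, U v -> U w -> U (fun i => a * v i + w i)).

Definition tensor_sub (U V : vec -> Prop) : tvec -> Prop :=
  lspan (fun t => exists u w, U u /\ V w /\ t = tens u w).

Definition subcoalgebra (D : vec -> Prop) : Prop :=
  subspace D /\ forall v, D v -> tensor_sub D D (Delta v).

Definition simple_subcoalgebra (D : vec -> Prop) : Prop :=
  subcoalgebra D /\ (exists v, D v /\ v <> (fun _ => 0)) /\
  forall E, subcoalgebra E -> (forall v, E v -> D v) ->
    (forall v, E v -> v = (fun _ => 0)) \/ (forall v, D v -> E v).

Definition coradical : vec -> Prop :=
  lspan (fun v => exists D, simple_subcoalgebra D /\ D v).

Definition wedge (U V : vec -> Prop) : vec -> Prop := fun c =>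
  inC c /\ lspan (fun t => tensor_sub U inC t \/ tensor_sub inC V t) (Delta c).

Fixpoint corad_filt (n : nat) : vec -> Prop :=
  match n with
  | 0%N => coradical
  | n'.+1 => wedge coradical (corad_filt n')
  end.

Definition has_chain (x y : X) (m : nat) : Prop :=
  exists f : nat -> X, f 0%N = x /\ f m = y /\ forall i, (i < m)%N -> lt (f i) (f i.+1).

Definition interval_length (x y : X) (n : nat) : Prop :=
  (sim x y /\ n = 0%N) \/
  (~ sim x y /\ (0 < n)%N /\ has_chain x y n /\ forall m, has_chain x y m -> (m <= n)%N).

Definition Dclass (c : X) : vec -> Prop :=
  lspan (fun w => exists x y, sim x c /\ sim y c /\ w = e x y).

End IncidenceCoalgebra.

From Pilot Require Import Defs.
From mathcomp Require Import all_boot all_algebra.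
From mathcomp Require Import boolp.
Set Implicit Arguments. Unset Strict Implicit. Unset Printing Implicit Defensive.
Import GRing.Theory.
Local Open Scope ring_scope.

(* Both parts are read off the support of Delta(e_{x,y}), which lives on the
   pairs (e_{x,z}, e_{z,y}) with x <= z <= y.  Slicing Delta(v) at a point of
   the support of v shows that a subcoalgebra containing v contains some
   e_{a,d} with a <= d, and then every e_{x,y} with a <= x <= y <= d; so the
   subcoalgebras D_c spanned by a class are simple and every simple
   subcoalgebra lies in one of them, which is (i).  For (ii), argue by
   induction on n: if e_{x,y} is in C_{n+1} and x < z <= ... <= y is a chain,
   the term e_{x,z} (x) e_{z,y} of Delta(e_{x,y}) cannot come from C_0 (x) C
   because x and z are not equivalent, so e_{z,y} is in C_n and the chain from
   z has length at most n; conversely the same decomposition of Delta(e_{x,y})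
   puts e_{x,y} in C_0 ^ C_n. *)

Section LinearSpan.
Variables (k : fieldType) (I : Type).
Implicit Types (S T : (I -> k) -> Prop) (v w : I -> k).

Lemma lspan_mono S T v : (forall w, S w -> lspan T w) -> lspan S v -> lspan T v.
Proof.
move=> ST; elim=> [|w /ST //|a v1 w _ IH1 _ IH2]; [exact: span0 | exact: span_comb].
Qed.

Lemma lspan_vanish S v i : (forall w, S w -> w i = 0) -> lspan S v -> v i = 0.
Proof. by move=> H; elim=> [//|w /H //|a v1 w _ -> _ ->]; rewrite mulr0 addr0. Qed.

Lemma lspan_supp S v i : lspan S v -> v i != 0 -> exists w, S w /\ w i != 0.
Proof.
move=> Sv /eqP vi; apply: contrapT => noS; apply/vi/(lspan_vanish _ Sv).
by move=> w Sw; apply: contrapT => /eqP wi; apply: noS; exists w.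
Qed.

Lemma exists_nonzero v : v <> (fun _ => 0) -> exists i, v i != 0.
Proof.
move=> nv; apply: contrapT => nz; apply: nv; apply: funext => i.
by apply: contrapT => /eqP vi; apply: nz; exists i.
Qed.

Definition unit_vec (i : I) : I -> k := fun j => if `[< j = i >] then 1 else 0.

Lemma lspan_finite_support S (L : list I) v :
  (forall i, v i != 0 -> List.In i L /\ lspan S (unit_vec i)) -> lspan S v.
Proof.
elim: L v => [|i L IH] v H.
  have -> : v = (fun _ => 0) by apply: funext => j; apply: contrapT => /eqP /H [].
  exact: span0.
have [vi0|vi] := eqVneq (v i) 0.
  apply: IH => j vj; have [[ij|jL] Sj] := H j vj => //.
  by move: vj; rewrite -ij vi0 eqxx.
pose v' j := if `[< j = i >] then 0 else v j.
have -> : v = (fun j => v i * unit_vec i j + v' j).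
  apply: funext => j; rewrite /unit_vec /v'; case: (pselect (j = i)) => [->|ji].
    by rewrite asboolT // mulr1 addr0.
  by rewrite asboolF // mulr0 add0r.
apply: span_comb; first by case: (H i vi).
apply: IH => j; rewrite /v'; case: (pselect (j = i)) => [->|ji].
  by rewrite asboolT // eqxx.
by rewrite asboolF // => /H [[ij|]]; [case: ji|].
Qed.

End LinearSpan.

Section IncidenceCoalgebra.
Variables (k : fieldType) (X : Type) (le : X -> X -> Prop).
Hypothesis Hpre : preorder_rel le.
Hypothesis Hlf : locally_finite le.

Notation vec := (vec k X).
Notation tvec := (tvec k X).
Notation e := (@e k X).
Notation C0 := (coradical (k := k) le).
Notation ltX := (Defs.lt le).
Implicit Types (u v w : vec) (t : tvec) (U V E D : vec -> Prop).

Let le_refl x : le x x. Proof. by case: Hpre. Qed.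
Let le_trans x y z : le x y -> le y z -> le x z.
Proof. by case: Hpre => _; apply. Qed.

Lemma e_diag x y : e x y (x, y) = 1.
Proof. by rewrite /e asboolT. Qed.

Lemma e_off x y p : p <> (x, y) -> e x y p = 0.
Proof. by move=> np; rewrite /e asboolF. Qed.

Lemma e_supp x y p : e x y p != 0 -> p = (x, y).
Proof. by move=> exy; apply: contrapT => np; move: exy; rewrite e_off ?eqxx. Qed.

Lemma e_neq0 x y : e x y <> (fun _ => 0).
Proof. by move=> /(congr1 (fun f => f (x, y))); rewrite e_diag => /eqP; rewrite oner_eq0. Qed.

Lemma eP v x y : v (x, y) = 1 -> (forall p, p <> (x, y) -> v p = 0) -> v = e x y.
Proof.
move=> vxy voff; apply: funext => p; case: (pselect (p = (x, y))) => [->|np].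
  by rewrite vxy e_diag.
by rewrite voff // e_off.
Qed.

Lemma tens_e x y z z' : tens (e x y) (e z z') = unit_vec k ((x, y), (z, z')).
Proof.
apply: funext => -[p q]; rewrite /tens /unit_vec /=.
case: (pselect (p = (x, y))) => [->|np]; last first.
  by rewrite e_off // mul0r asboolF // => -[].
rewrite e_diag mul1r; case: (pselect (q = (z, z'))) => [->|nq].
  by rewrite e_diag asboolT.
by rewrite e_off // asboolF // => -[].
Qed.

Lemma tens_supp u w p q : tens u w (p, q) != 0 -> u p != 0 /\ w q != 0.
Proof. by rewrite /tens /= => H; split; apply: contraNneq H => ->; rewrite ?mul0r ?mulr0. Qed.

Lemma inC_supp v p : inC le v -> v p != 0 -> le p.1 p.2.
Proof. by move=> Cv /(lspan_supp Cv) [_ [[x [y [lxy ->]]] /e_supp ->]]. Qed.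

Lemma inC_finite_support v : inC le v -> exists L, forall p, v p != 0 -> List.In p L.
Proof.
elim=> [|_ [x [y [_ ->]]]|a v1 w _ [L1 H1] _ [L2 H2]].
- by exists nil => p; rewrite eqxx.
- by exists [:: (x, y)] => p /e_supp ->; left.
- exists (L1 ++ L2) => p vp; apply: List.in_or_app.
  have [v1p|v1p] := eqVneq (v1 p) 0; last by left; exact: H1.
  by right; apply: H2; apply: contraNneq vp => ->; rewrite v1p mulr0 addr0.
Qed.

Lemma Delta_lin a v w :
  Delta le (fun i => a * v i + w i) = fun pq => a * Delta le v pq + Delta le w pq.
Proof. by apply: funext => -[[p1 p2] [q1 q2]] /=; case: ifP; rewrite ?mulr0 ?addr0. Qed.

Lemma Delta0 : Delta le (fun _ : X * X => 0 : k) = fun _ => 0.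
Proof. by apply: funext => -[[p1 p2] [q1 q2]] /=; case: ifP. Qed.

Lemma lspan_Delta_e (S : tvec -> Prop) x y :
  (forall z, le x z -> le z y -> lspan S (tens (e x z) (e z y))) ->
  lspan S (Delta le (e x y)).
Proof.
move=> H; have [s Hs] := Hlf x y.
apply: (@lspan_finite_support _ _ _ (List.map (fun z => ((x, z), (z, y))) s)).
move=> [[a b] [c d]] /=.
case: (pselect (b = c /\ le a b /\ le b d)) => [cond|nc]; last first.
  by rewrite asboolF ?eqxx.
rewrite (asboolT cond); case: cond => <- [lab lbd] /e_supp [ax dy]; subst a d; split.
  by apply: List.in_map; apply: Hs.
by rewrite -tens_e; apply: H.
Qed.

Lemma tensor_sub_supp U V t p q :
  tensor_sub U V t -> t (p, q) != 0 ->
  exists u w, [/\ U u, V w, u p != 0 & w q != 0].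
Proof.
move=> UVt /(lspan_supp UVt) [_ [[u [w [Uu [Vw ->]]]] /tens_supp [up wq]]].
by exists u, w.
Qed.

Lemma wedge_supp U V c p q :
  wedge le U V c -> Delta le c (p, q) != 0 ->
  (exists2 u, U u & u p != 0) \/ (exists2 w, V w & w q != 0).
Proof.
move=> [_ Dc] /(lspan_supp Dc) [t [[UCt|CVt] tpq]].
- by have [u [w [Uu _ up _]]] := tensor_sub_supp UCt tpq; left; exists u.
- by have [u [w [_ Vw _ wq]]] := tensor_sub_supp CVt tpq; right; exists w.
Qed.

Lemma subspace_inC U v : subspace le U -> U v -> inC le v.
Proof. by case=> HC _; apply: HC. Qed.

Lemma subspace0 U : subspace le U -> U (fun _ => 0).
Proof. by case=> _ []. Qed.

Lemma subspace_comb U a v w :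
  subspace le U -> U v -> U w -> U (fun i => a * v i + w i).
Proof. by case=> _ [_]; apply. Qed.

Lemma subspaceZ U a v : subspace le U -> U v -> U (fun i => a * v i).
Proof.
move=> sU Uv; have := subspace_comb a sU Uv (subspace0 sU).
by congr U; apply: funext => i; rewrite addr0.
Qed.

Definition lslice (p : X * X) t : vec := fun q => t (p, q).
Definition rslice (q : X * X) t : vec := fun p => t (p, q).

Lemma tensor_sub_lslice U V p t : subspace le V -> tensor_sub U V t -> V (lslice p t).
Proof.
move=> sV; elim=> [|_ [u [w [_ [Vw ->]]]]|a v w _ IH1 _ IH2].
- exact: (subspace0 sV).
- by rewrite /lslice /tens /=; apply: subspaceZ.
- exact: (subspace_comb a sV IH1 IH2).
Qed.

Lemma tensor_sub_rslice U V q t : subspace le U -> tensor_sub U V t -> U (rslice q t).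
Proof.
move=> sU; elim=> [|_ [u [w [Uu [_ ->]]]]|a v w _ IH1 _ IH2].
- exact: (subspace0 sU).
- have -> : rslice q (tens u w) = fun p => w q * u p.
    by apply: funext => p; rewrite /rslice /tens mulrC.
  exact: (subspaceZ _ sU Uu).
- exact: (subspace_comb a sU IH1 IH2).
Qed.

Lemma lslice_Delta_e a x d : le a x -> le x d -> lslice (a, x) (Delta le (e a d)) = e x d.
Proof.
move=> lax lxd; apply: eP => [|[c d'] ne]; rewrite /lslice /=.
  by rewrite asboolT ?e_diag.
case: (pselect (x = c /\ le a x /\ le x d')) => [cond|nc]; last by rewrite asboolF.
by rewrite (asboolT cond) e_off // => -[dd]; apply: ne; rewrite (proj1 cond) dd.
Qed.

Lemma rslice_Delta_e x y d : le x y -> le y d -> rslice (y, d) (Delta le (e x d)) = e x y.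
Proof.
move=> lxy lyd; apply: eP => [|[c y'] ne]; rewrite /rslice /=.
  by rewrite asboolT ?e_diag.
case: (pselect (y' = y /\ le c y' /\ le y' d)) => [cond|nc]; last by rewrite asboolF.
by rewrite (asboolT cond) e_off // => -[cc]; apply: ne; rewrite cc (proj1 cond).
Qed.

Lemma rslice_lslice_Delta v a d : le a d ->
  rslice (d, d) (Delta le (lslice (a, a) (Delta le v))) = fun p => v (a, d) * e a d p.
Proof.
move=> lad; apply: funext => -[c d']; rewrite /rslice /lslice /=.
case: (pselect ((c, d') = (a, d))) => [[-> ->]|ne].
  by rewrite !asboolT // e_diag mulr1.
rewrite e_off // mulr0.
case: (pselect (d' = d /\ le c d' /\ le d' d)) => [cd|nd]; last by rewrite asboolF.
by rewrite (asboolT cd) asboolF // => -[ac _]; apply: ne; rewrite -ac (proj1 cd).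
Qed.

Lemma subcoalgebra_e E a d x y :
  subcoalgebra le E -> E (e a d) -> le a x -> le x y -> le y d -> E (e x y).
Proof.
move=> [sE DE] Ead lax lxy lyd.
have Exd : E (e x d).
  by rewrite -(lslice_Delta_e lax (le_trans lxy lyd)); apply: tensor_sub_lslice (DE _ Ead).
by rewrite -(rslice_Delta_e lxy lyd); apply: tensor_sub_rslice (DE _ Exd).
Qed.

Lemma subcoalgebra_supp_e E v p : subcoalgebra le E -> E v -> v p != 0 -> E (e p.1 p.2).
Proof.
case: p => a d [sE DE] Ev vad /=.
have lad := inC_supp (subspace_inC sE Ev) vad.
have E2 : E (rslice (d, d) (Delta le (lslice (a, a) (Delta le v)))).
  exact/(tensor_sub_rslice _ sE)/DE/(tensor_sub_lslice _ sE)/DE.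
have := subspaceZ (v (a, d))^-1 sE E2; rewrite rslice_lslice_Delta //.
by congr E; apply: funext => p; rewrite mulrA mulVf ?mul1r.
Qed.

Lemma Dclass_supp c v p : Dclass le c v -> v p != 0 -> sim le p.1 c /\ sim le p.2 c.
Proof. by move=> Dv /(lspan_supp Dv) [_ [[x [y [sx [sy ->]]]] /e_supp ->]]. Qed.

Lemma Dclass_e c x y : sim le x c -> sim le y c -> Dclass le c (e x y).
Proof. by move=> sx sy; apply: span_in; exists x, y. Qed.

Lemma Dclass_subcoalgebra c : subcoalgebra le (Dclass (k := k) le c).
Proof.
split; [split; [|split]|].
- move=> v; apply: lspan_mono => _ [x [y [[lxc _] [[_ lcy] ->]]]].
  by apply: span_in; exists x, y; split=> //; apply: le_trans lxc lcy.
- exact: span0.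
- by move=> a v w; apply: span_comb.
- move=> v; elim=> [|_ [x [y [[lxc lcx] [[lyc lcy] ->]]]]|a v1 w _ IH1 _ IH2].
  + by rewrite Delta0; apply: span0.
  + apply: lspan_Delta_e => z lxz lzy; apply: span_in.
    have szc : sim le z c by split; [apply: le_trans lzy lyc | apply: le_trans lcx lxz].
    by exists (e x z), (e z y); do !split; apply: Dclass_e.
  + by rewrite Delta_lin; apply: span_comb.
Qed.

Lemma Dclass_sub_subcoalgebra E c a d v :
  subcoalgebra le E -> E (e a d) -> sim le a c -> sim le d c -> Dclass le c v -> E v.
Proof.
move=> sE Ead [lac lca] [ldc lcd]; elim=> [|_ [x [y [[lxc lcx] [[lyc lcy] ->]]]]|].
- exact: (subspace0 sE.1).
- apply: (subcoalgebra_e sE Ead); apply: le_trans; eassumption.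
- by move=> b v1 w _ IH1 _ IH2; apply: (subspace_comb b sE.1).
Qed.

Lemma Dclass_simple c : simple_subcoalgebra le (Dclass (k := k) le c).
Proof.
split; first exact: Dclass_subcoalgebra.
split; first by exists (e c c); split; [apply: Dclass_e; split | apply: e_neq0].
move=> E sE ED; case: (pselect (forall v, E v -> v = (fun _ => 0))) => [|E0]; first by left.
right; have [v Ev] : exists v, E v /\ v <> (fun _ => 0).
  by apply: contrapT => nE; apply: E0 => v Ev; apply: contrapT => nv; apply: nE; exists v.
case: Ev => Ev /exists_nonzero [p vp].
have [sac sdc] := Dclass_supp (ED _ Ev) vp.
by move=> u; apply: (Dclass_sub_subcoalgebra sE (subcoalgebra_supp_e sE Ev vp) sac sdc).
Qed.

Lemma simple_sub_Dclass D :
  simple_subcoalgebra le D -> exists c, forall v, D v -> Dclass le c v.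
Proof.
move=> [sD [[v [Dv nv]] Dsimple]].
have [[a d] vad] := exists_nonzero nv.
have Dad := subcoalgebra_supp_e sD Dv vad.
have lad := inC_supp (subspace_inC sD.1 Dv) vad.
have Daa := subcoalgebra_e sD Dad (le_refl a) (le_refl a) lad.
have saa : sim le a a by split.
have DclassD w : Dclass le a w -> D w := Dclass_sub_subcoalgebra sD Daa saa saa.
exists a; case: (Dsimple _ (Dclass_subcoalgebra a) DclassD) => // Dclass0.
by case: (@e_neq0 a a); apply: Dclass0; apply: Dclass_e.
Qed.

Lemma coradicalE v : C0 v <-> lspan (fun w => exists c, Dclass le c w) v.
Proof.
split; apply: lspan_mono.
- move=> w [D [sD Dw]]; have [c Dc] := simple_sub_Dclass sD.
  by apply: span_in; exists c; apply: Dc.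
- by move=> w [c Dw]; apply: span_in; exists (Dclass le c); split=> //; apply: Dclass_simple.
Qed.


Lemma sim_trans x y z : sim le x y -> sim le y z -> sim le x z.
Proof. by move=> [lxy lyx] [lyz lzy]; split; apply: le_trans; eassumption. Qed.

Lemma coradical_e x y : sim le x y -> C0 (e x y).
Proof.
move=> [lxy lyx]; apply/coradicalE; apply: span_in; exists x.
by apply: Dclass_e; split.
Qed.

Lemma coradical_supp v p : C0 v -> v p != 0 -> sim le p.1 p.2.
Proof.
move=> /coradicalE C0v /(lspan_supp C0v) [w [[c Dw] wp]].
by have [sx [lyc lcy]] := Dclass_supp Dw wp; apply: sim_trans sx _.
Qed.

Lemma strict_trans x y z : ltX x y -> ltX y z -> ltX x z.
Proof.
move=> [lxy nyx] [lyz nzy]; split; first exact: le_trans lxy lyz.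
by move=> lzx; apply: nzy; apply: le_trans lzx lxy.
Qed.

Lemma has_chain0 x : has_chain le x x 0.
Proof. by exists (fun _ => x). Qed.

Lemma has_chain_cons x z y m : ltX x z -> has_chain le z y m -> has_chain le x y m.+1.
Proof.
move=> ltxz [f [f0 [fm Hf]]].
exists (fun i => if i is j.+1 then f j else x); split=> //; split=> // -[|i] im /=.
  by rewrite f0.
exact: Hf.
Qed.

Lemma has_chain_behead x y m :
  has_chain le x y m.+1 -> exists2 z, ltX x z & has_chain le z y m.
Proof.
move=> [f [<- [fm Hf]]]; exists (f 1%N); first exact: Hf.
by exists (fun i => f i.+1); split=> //; split=> // i im; apply: Hf.
Qed.

Lemma has_chain_lt x y m : has_chain le x y m -> (0 < m)%N -> ltX x y.
Proof.
elim: m x => // m IH x /has_chain_behead [z ltxz chz] _.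
case: m IH chz => [|m] IH chz; last exact: strict_trans ltxz (IH _ chz _).
by case: chz => f [f0 [fy _]]; rewrite -fy f0.
Qed.

Definition chain_bounded n x y := forall m, has_chain le x y m -> (m <= n)%N.

Lemma interval_length_leqE n x y : le x y ->
  (exists l, interval_length le x y l /\ (l <= n)%N) <-> chain_bounded n x y.
Proof.
move=> lxy; split.
- move=> [l [[[[_ lyx] ->]|[_ [_ [_ lmax]]]] ln]] m chm.
  + by case: m chm => // m /has_chain_lt [] // _ [].
  + exact: leq_trans (lmax _ chm) ln.
- move=> B; case: (pselect (sim le x y)) => [sxy|nsxy]; first by exists 0%N; split=> //; left.
  have ltxy : ltX x y by split=> // lyx; apply: nsxy.
  have ch1 : has_chain le x y 1 := has_chain_cons ltxy (has_chain0 y).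
  have exP : exists m, `[< has_chain le x y m >] by exists 1%N; apply: asboolT.
  have ubP m : `[< has_chain le x y m >] -> (m <= n)%N by move/asboolW; apply: B.
  case: (ex_maxnP exP ubP) => l /asboolW chl lmax.
  exists l; split; last exact: B.
  right; do !split=> //; first exact: lmax _ (asboolT ch1).
  by move=> m chm; apply: lmax (asboolT chm).
Qed.

Lemma chain_bounded0 x y : le x y -> chain_bounded 0 x y <-> sim le x y.
Proof.
move=> lxy; split.
- move=> B; split=> //; apply: contrapT => nyx.
  by have := B _ (has_chain_cons (conj lxy nyx) (has_chain0 y)).
- by move=> [_ lyx] [//|m] /has_chain_lt [] // _ [].
Qed.

Definition filt_gen n w := exists x y, le x y /\
  (exists l, interval_length le x y l /\ (l <= n)%N) /\ w = e x y.

Lemma filt_gen_e n x y : le x y -> chain_bounded n x y -> filt_gen n (e x y).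
Proof. by move=> lxy B; exists x, y; do !split=> //; apply/interval_length_leqE. Qed.

Lemma lspan_filt_gen_supp n w p :
  lspan (filt_gen n) w -> w p != 0 -> le p.1 p.2 /\ chain_bounded n p.1 p.2.
Proof.
move=> Sw /(lspan_supp Sw) [_ [[x [y [lxy [Hl ->]]]] /e_supp ->]].
by split=> //; apply/interval_length_leqE.
Qed.

Lemma coradical_filt_gen0 v : C0 v <-> lspan (filt_gen 0) v.
Proof.
rewrite coradicalE; split; apply: lspan_mono.
- move=> w [c Dw]; apply: lspan_mono Dw => _ [x [y [sx [[lyc lcy] ->]]]].
  have [lxy lyx] : sim le x y := sim_trans sx (conj lcy lyc).
  by apply: span_in; apply: filt_gen_e => //; apply/chain_bounded0.
- move=> _ [x [y [lxy [Hl ->]]]]; apply: span_in; exists x.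
  have [_ lyx] := proj1 (chain_bounded0 lxy) (proj1 (interval_length_leqE 0 lxy) Hl).
  by apply: Dclass_e; split.
Qed.

Section WedgeStep.
Variables (n : nat) (U : vec -> Prop).
Hypothesis U_span : forall v, U v <-> lspan (filt_gen n) v.

Lemma wedge_chain_bounded v p : wedge le C0 U v -> v p != 0 -> chain_bounded n.+1 p.1 p.2.
Proof.
case: p => x y Wv vxy m chm /=; case: (leqP m n.+1) => // ltnm; exfalso.
case: m ltnm chm => // m; rewrite ltnS => ltnm /has_chain_behead [z ltxz chz].
have [lzy _] := has_chain_lt chz (leq_ltn_trans (leq0n n) ltnm).
have Dxy : Delta le v ((x, z), (z, y)) != 0 by rewrite /= asboolT //; case: ltxz.
case: (wedge_supp Wv Dxy) => [[u C0u uxz]|[w Uw wzy]].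
- by case: ltxz => _; apply; case: (coradical_supp C0u uxz).
- have [_ B] := lspan_filt_gen_supp (proj1 (U_span w) Uw) wzy.
  by have := B _ chz; rewrite leqNgt ltnm.
Qed.

Lemma wedge_filt_gen v : wedge le C0 U v <-> lspan (filt_gen n.+1) v.
Proof.
split.
- move=> Wv; have [L HL] := inC_finite_support Wv.1.
  apply: (lspan_finite_support (L := L)) => -[x y] vxy; split; first exact: HL.
  apply: span_in; apply: (filt_gen_e (inC_supp Wv.1 vxy)).
  exact: wedge_chain_bounded Wv vxy.
- move=> Sv; split.
    by apply: lspan_mono Sv => _ [x [y [lxy [_ ->]]]]; apply: span_in; exists x, y.
  elim: Sv => [|_ [x [y [lxy [Hl ->]]]]|a v1 w _ IH1 _ IH2].
  + by rewrite Delta0; apply: span0.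
  + have B := proj1 (interval_length_leqE n.+1 lxy) Hl.
    apply: lspan_Delta_e => z lxz lzy; apply: span_in.
    case: (pselect (le z x)) => [lzx|nzx].
    * left; apply: span_in; exists (e x z), (e z y); do !split.
        exact: coradical_e.
      by apply: span_in; exists z, y.
    * right; apply: span_in; exists (e x z), (e z y); do !split.
        by apply: span_in; exists x, z.
      apply/U_span/span_in/filt_gen_e => // m chm.
      exact: B _ (has_chain_cons (conj lxz nzx) chm).
  + by rewrite Delta_lin; apply: span_comb.
Qed.

End WedgeStep.

Lemma corad_filtE n v : corad_filt le n v <-> lspan (filt_gen n) v.
Proof.
elim: n v => [|n IH] v; first exact: coradical_filt_gen0.
exact: wedge_filt_gen.
Qed.

End IncidenceCoalgebra.

Theorem mainTheorem4 (k : fieldType) (X : Type) (le : X -> X -> Prop)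
  (Hpre : preorder_rel le) (Hlf : locally_finite le) :
  (forall v : vec k X, @coradical k X le v <->
     lspan (fun w => exists c : X, @Dclass k X le c w) v) /\
  (forall (n : nat) (v : vec k X), @corad_filt k X le n v <->
     lspan (fun w => exists x y, le x y /\
             (exists l, interval_length le x y l /\ (l <= n)%N) /\
             w = @e k X x y) v).
Proof.
split; first exact: coradicalE.
exact: corad_filtE.
Qed.
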